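(* Let $A\in\mathbb Z_{\ge0}^{m\times m}$, $B\in\mathbb Z_{\ge0}^{n\times n}$, $C\in\mathbb Z_{\ge0}^{p\times p}$ and nonnegative integer matrices $R_1,S_1,R_2,S_2,R_3,S_3$ of compatible sizes with $A=R_1S_1$, $B=S_1R_1$, $B=R_2S_2$, $C=S_2R_2$, $A=R_3S_3$, $C=S_3R_3$, satisfying the triangle equations $R_1R_2=R_3$, $R_2S_3=S_1$, $S_3R_1=S_2$. Then the restricted matrices also form such a triangle: with $A'=A_{J_A\times J_A}$, $B'=B_{J_B\times J_B}$, $C'=C_{J_C\times J_C}$, $R_1'=(R_1)_{J_A\times J_B}$, $S_1'=(S_1)_{J_B\times J_A}$, $R_2'=(R_2)_{J_B\times J_C}$, $S_2'=(S_2)_{J_C\times J_B}$, $R_3'=(R_3)_{J_A\times J_C}$, $S_3'=(S_3)_{J_C\times J_A}$ we have $A'=R_1'S_1'$, $B'=S_1'R_1'$, $B'=R_2'S_2'$, $C'=S_2'R_2'$, $A'=R_3'S_3'$, $C'=S_3'R_3'$ and $R_1'R_2'=R_3'$, $R_2'S_3'=S_1'$, $S_3'R_1'=S_2'$.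
   Context: For a matrix $M$ and index sets $K,L$, $M_{K\times L}$ is the submatrix with rows in $K$ and columns in $L$. For a square matrix $A\in\mathbb Z_{\ge0}^{m\times m}$, $J_A\subseteq\{1,\dots,m\}$ is the set of indices $i$ such that for every $k\ge1$ the $i$-th row and the $i$-th column of $A^k$ are nonzero (the indices occurring in bi-infinite paths of the graph with adjacency matrix $A$). *)

From mathcomp Require Import all_boot all_order all_algebra.
From mathcomp Require Import boolp.
Set Implicit Arguments. Unset Strict Implicit. Unset Printing Implicit Defensive.
Import GRing.Theory.
Local Open Scope ring_scope.

Definition mxpow (m : nat) (A : 'M[nat]_m) (k : nat) : 'M[nat]_m :=
  iter k (mulmx A) 1%:M.

Definition JA (m : nat) (A : 'M[nat]_m) : {set 'I_m} :=
  [set i | `[< forall k : nat, (0 < k)%N ->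
              (exists j, mxpow A k i j != 0%N) /\ (exists j, mxpow A k j i != 0%N) >]].

(* M_{K x L}: rows indexed by K and columns by L, both in increasing order. *)
Definition restrmx (m n : nat) (K : {set 'I_m}) (L : {set 'I_n}) (M : 'M[nat]_(m, n))
  : 'M[nat]_(#|K|, #|L|) :=
  \matrix_(i < #|K|, j < #|L|) M (enum_val i) (enum_val j).

From mathcomp Require Import all_boot all_order all_algebra.
From mathcomp Require Import boolp.
Set Implicit Arguments. Unset Strict Implicit. Unset Printing Implicit Defensive.
Local Open Scope ring_scope.

(* Proof idea: for an elementary equivalence Q = Y X, P = X Y of nonnegative
   matrices, (Y X)^(t+1) = Y (X Y)^t X.  Hence if Y has a positive entry at
   (k, l) and row l of every power of P is nonzero, so is row k of every power
   of Q; dually for columns via X.  So an index k on a positive path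
   i -> k -> l between J-indices on both sides lies in J_Q.  By nonnegativity
   the nonzero terms of an entry of a product restricted to J's all run
   through the middle J, so every product identity survives restriction. *)

Lemma mxpowS (m : nat) (A : 'M[nat]_m) t : mxpow A t.+1 = A *m mxpow A t.
Proof. by []. Qed.

Lemma mxpowSr (m : nat) (A : 'M[nat]_m) t : mxpow A t.+1 = mxpow A t *m A.
Proof.
elim: t => [|t IH]; first by rewrite /mxpow /= mulmx1 mul1mx.
by rewrite mxpowS {1}IH mulmxA -mxpowS.
Qed.

Lemma mxpowS_mulmxC (m n : nat) (X : 'M[nat]_(m, n)) (Y : 'M[nat]_(n, m)) t :
  mxpow (Y *m X) t.+1 = Y *m mxpow (X *m Y) t *m X.
Proof.
elim: t => [|t IH]; first by rewrite /mxpow /= !mulmx1.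
by rewrite mxpowS IH mxpowS !mulmxA.
Qed.

Lemma trmx_mxpow (m : nat) (A : 'M[nat]_m) t : (mxpow A t)^T = mxpow A^T t.
Proof.
elim: t => [|t IH]; first exact: trmx1.
by rewrite mxpowS trmx_mul IH -mxpowSr.
Qed.

Lemma mulmx_nat_neq0 (m n q : nat) (X : 'M[nat]_(m, n)) (Y : 'M[nat]_(n, q)) i l :
  ((X *m Y) i l != 0%N) = [exists k, (X i k != 0%N) && (Y k l != 0%N)].
Proof.
rewrite mxE sum_nat_eq0 negb_forall; apply: eq_existsb => k.
by rewrite muln_eq0 negb_or.
Qed.

Definition pow_row_nz (m : nat) (A : 'M[nat]_m) (i : 'I_m) : Prop :=
  forall t, (0 < t)%N -> exists j, mxpow A t i j != 0%N.

Lemma in_JA (m : nat) (A : 'M[nat]_m) i :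
  (i \in JA A) <-> pow_row_nz A i /\ pow_row_nz A^T i.
Proof.
rewrite inE asboolE; split=> [HA | [Hr Hc] t t_gt0].
  split=> t t_gt0; have [Hrow [j Hj]] := HA t t_gt0; first exact: Hrow.
  by exists j; rewrite -trmx_mxpow mxE.
split; first exact: Hr.
by have [j Hj] := Hc t t_gt0; exists j; rewrite -trmx_mxpow mxE in Hj.
Qed.

Lemma pow_row_nz_mulmxC (m n : nat) (X : 'M[nat]_(m, n)) (Y : 'M[nat]_(n, m)) k l :
  pow_row_nz (X *m Y) l -> Y k l != 0%N -> pow_row_nz (Y *m X) k.
Proof.
move=> Hl Ykl [//|t] _; have [j] := Hl t.+1 isT.
rewrite mxpowSr mulmxA mulmx_nat_neq0 => /existsP [j' /andP [Hj' _]].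
exists j'; rewrite mxpowS_mulmxC -mulmxA mulmx_nat_neq0.
by apply/existsP; exists l; rewrite Ykl.
Qed.

Lemma pow_col_nz_mulmxC (m n : nat) (X : 'M[nat]_(m, n)) (Y : 'M[nat]_(n, m)) i k :
  pow_row_nz (X *m Y)^T i -> X i k != 0%N -> pow_row_nz (Y *m X)^T k.
Proof.
rewrite !trmx_mul => Hi Xik; apply: pow_row_nz_mulmxC Hi _.
by rewrite mxE.
Qed.

Lemma in_JA_path (n r s : nat) (Q : 'M[nat]_n) (P1 : 'M[nat]_r) (P2 : 'M[nat]_s)
    (Xr : 'M[nat]_(r, n)) (Yr : 'M[nat]_(n, r))
    (Xc : 'M[nat]_(s, n)) (Yc : 'M[nat]_(n, s)) i k l :
  Q = Yr *m Xr -> P1 = Xr *m Yr -> Q = Yc *m Xc -> P2 = Xc *m Yc ->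
  i \in JA P2 -> l \in JA P1 -> Xc i k != 0%N -> Yr k l != 0%N -> k \in JA Q.
Proof.
move=> hQr hP1 hQc hP2; rewrite hP2 => /in_JA [_ Hi]; rewrite hP1 => /in_JA [Hl _].
move=> Xik Ykl; apply/in_JA; split.
  by rewrite hQr; apply: pow_row_nz_mulmxC Hl Ykl.
by rewrite hQc; apply: pow_col_nz_mulmxC Hi Xik.
Qed.

Lemma restrmx_mulmx (m n q : nat) (X : 'M[nat]_(m, n)) (Y : 'M[nat]_(n, q))
    (I : {set 'I_m}) (J : {set 'I_n}) (K : {set 'I_q}) :
  (forall i k l, i \in I -> l \in K -> X i k != 0%N -> Y k l != 0%N -> k \in J) ->
  restrmx I K (X *m Y) = restrmx I J X *m restrmx J K Y.
Proof.
move=> HJ; apply/matrixP => a b; rewrite !mxE.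
under [RHS]eq_bigr do rewrite !mxE.
rewrite -(big_enum_val (fun k => X (enum_val a) k * Y k (enum_val b))).
rewrite (bigID (mem J)) /= [T in (_ + T)%R]big1 ?GRing.addr0 // => k Jk.
apply/eqP; apply: contraNT Jk.
rewrite -[(_ * _)%R]/(_ * _)%N muln_eq0 negb_or => /andP [Xk Yk].
exact: HJ (enum_valP a) (enum_valP b) Xk Yk.
Qed.

Lemma restrmx_mulmx_JA (n r s : nat) (Q : 'M[nat]_n) (P1 : 'M[nat]_r) (P2 : 'M[nat]_s)
    (Xr : 'M[nat]_(r, n)) (Yr : 'M[nat]_(n, r))
    (Xc : 'M[nat]_(s, n)) (Yc : 'M[nat]_(n, s)) :
  Q = Yr *m Xr -> P1 = Xr *m Yr -> Q = Yc *m Xc -> P2 = Xc *m Yc ->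
  restrmx (JA P2) (JA P1) (Xc *m Yr)
  = restrmx (JA P2) (JA Q) Xc *m restrmx (JA Q) (JA P1) Yr.
Proof.
move=> hQr hP1 hQc hP2; apply: restrmx_mulmx => i k l.
exact: in_JA_path hQr hP1 hQc hP2.
Qed.

Theorem mainTheorem14 (m n p : nat)
  (A : 'M[nat]_m) (B : 'M[nat]_n) (C : 'M[nat]_p)
  (R1 : 'M[nat]_(m, n)) (S1 : 'M[nat]_(n, m))
  (R2 : 'M[nat]_(n, p)) (S2 : 'M[nat]_(p, n))
  (R3 : 'M[nat]_(m, p)) (S3 : 'M[nat]_(p, m))
  (hA1 : A = R1 *m S1) (hB1 : B = S1 *m R1)
  (hB2 : B = R2 *m S2) (hC2 : C = S2 *m R2)
  (hA3 : A = R3 *m S3) (hC3 : C = S3 *m R3)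
  (t1 : R1 *m R2 = R3) (t2 : R2 *m S3 = S1) (t3 : S3 *m R1 = S2) :
  let JA' := JA A in let JB := JA B in let JC := JA C in
  let A' := restrmx JA' JA' A in let B' := restrmx JB JB B in let C' := restrmx JC JC C in
  let R1' := restrmx JA' JB R1 in let S1' := restrmx JB JA' S1 in
  let R2' := restrmx JB JC R2 in let S2' := restrmx JC JB S2 in
  let R3' := restrmx JA' JC R3 in let S3' := restrmx JC JA' S3 in
  (A' = R1' *m S1' /\ B' = S1' *m R1' /\ B' = R2' *m S2' /\
   C' = S2' *m R2' /\ A' = R3' *m S3' /\ C' = S3' *m R3') /\
  (R1' *m R2' = R3' /\ R2' *m S3' = S1' /\ S3' *m R1' = S2').
Proof.
move=> JA' JB JC A' B' C' R1' S1' R2' S2' R3' S3'.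
split; [split; [|split; [|split; [|split; [|split]]]] | split; [|split]].
- by rewrite /A' {1}hA1 (restrmx_mulmx_JA hB1 hA1 hB1 hA1).
- by rewrite /B' {1}hB1 (restrmx_mulmx_JA hA1 hB1 hA1 hB1).
- by rewrite /B' {1}hB2 (restrmx_mulmx_JA hC2 hB2 hC2 hB2).
- by rewrite /C' {1}hC2 (restrmx_mulmx_JA hB2 hC2 hB2 hC2).
- by rewrite /A' {1}hA3 (restrmx_mulmx_JA hC3 hA3 hC3 hA3).
- by rewrite /C' {1}hC3 (restrmx_mulmx_JA hA3 hC3 hA3 hC3).
- by rewrite /R3' -t1 (restrmx_mulmx_JA hB2 hC2 hB1 hA1).
- by rewrite /S1' -t2 (restrmx_mulmx_JA hC3 hA3 hC2 hB2).
- by rewrite /S2' -t3 (restrmx_mulmx_JA hA1 hB1 hA3 hC3).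
Qed.
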